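(* Let $G$ be a group satisfying the property $\mathsf{FM}$ and $\nu$ a conjugation-invariant pseudo-norm on $G$. Then for any $\mathtt{g}\in A_G$ and any real numbers $\lambda_1,\lambda_2$, \[ \|\bar{\mathtt{g}}^{(\lambda_1+\lambda_2)}\cdot\mathtt{g}^{(\lambda_1)}\cdot\mathtt{g}^{(\lambda_2)}\|_\nu=0. \]
   Context: A conjugation-invariant pseudo-norm on a group $G$ is a function $\nu\colon G\to\mathbb{R}_{\ge0}$ with $\nu(1)=0$, $\nu(f)=\nu(f^{-1})$, $\nu(fg)\le\nu(f)+\nu(g)$ and $\nu(gfg^{-1})=\nu(f)$ for all $f,g\in G$. Property $\mathsf{FM}$: for a subgroup $H\le G$, let $\nu_H(f)$ be the minimal $k$ such that $f=g_1h_1g_1^{-1}\cdots g_kh_kg_k^{-1}$ ($g_i\in G,h_i\in H$), $\infty$ if none; for $K\subset G$ let $\mathrm{D}^f_H(K)$ be the set of $h_0\in G$ such that for all $g_1,\dots,g_k\in G$ there is $h\in G$ with every element of $hh_0h^{-1}K(hh_0h^{-1})^{-1}$ commuting with every element of $\bigcup_i g_iHg_i^{-1}$. $(G,H)$ satisfies $\mathsf{FM}$ if $\nu_H<\infty$ on $G$ and $\mathrm{D}^f_H(h_1Hh_1^{-1}\cup\dots\cup h_kHh_k^{-1})\ne\emptyset$ for all $h_1,\dots,h_k\in G$; $G$ satisfies $\mathsf{FM}$ if some $(G,H)$ does. $A_G=\coprod_{k\ge0}(G\times\mathbb{R})^k$, elements written as formal words $g_1^{s_1}\cdots g_k^{s_k}$,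 empty word $1$. For $\mathtt{g}=g_1^{s_1}\cdots g_k^{s_k}$: $\mathtt{g}\cdot\mathtt{h}$ is concatenation, $\bar{\mathtt{g}}=g_k^{-s_k}\cdots g_1^{-s_1}$, $\mathtt{g}^{(\lambda)}=g_1^{\lambda s_1}\cdots g_k^{\lambda s_k}$, and $\|\mathtt{g}\|_\nu=\lim_{n\to\infty}\frac1n\nu(g_1^{[s_1n]}\cdots g_k^{[s_kn]})$ ($[\cdot]$ integer part; the limit exists under $\mathsf{FM}$), $\|1\|_\nu=0$. *)

From HB Require Import structures.
From mathcomp Require Import all_boot all_order all_algebra.
From mathcomp Require Import all_classical all_reals all_analysis.
Set Implicit Arguments. Unset Strict Implicit. Unset Printing Implicit Defensive.
Import Order.TTheory GRing.Theory Num.Theory.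
Local Open Scope ring_scope.

Section Defs.
Variable G : groupType.

Definition zpowg (g : G) (z : int) : G :=
  match z with
  | Posz n => (g ^+ n)%g
  | Negz n => ((g ^+ n.+1)^-1)%g
  end.

Definition cj (g h : G) : G := (g * h * g^-1)%g.

Definition ci_pseudo_norm (R : realType) (nu : G -> R) : Prop :=
  [/\ nu 1%g = 0,
      forall f, 0 <= nu f,
      forall f, nu (f^-1)%g = nu f,
      forall f g, nu (f * g)%g <= nu f + nu g
    & forall f g, nu (cj g f) = nu f].

Definition is_subgroup (H : G -> Prop) : Prop :=
  [/\ H 1%g, forall x y, H x -> H y -> H (x * y)%g & forall x, H x -> H (x^-1)%g].

Definition gprod (s : seq G) : G := foldr (fun x acc => (x * acc)%g) 1%g s.

(* nu_H(f) < oo : f is a product of conjugates of elements of H *)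
Definition nuH_finite (H : G -> Prop) (f : G) : Prop :=
  exists s : seq (G * G), (forall p, p \in s -> H p.2) /\
    f = gprod [seq cj p.1 p.2 | p <- s].

Definition in_conj_union (H : G -> Prop) (gs : seq G) (x : G) : Prop :=
  exists2 g, g \in gs & exists2 h, H h & x = cj g h.

Definition in_DfH (H : G -> Prop) (K : G -> Prop) (h0 : G) : Prop :=
  forall gs : seq G, exists h : G,
    forall x y, K x -> in_conj_union H gs y ->
      commute (cj (cj h h0) x) y.

Definition FM_pair (H : G -> Prop) : Prop :=
  [/\ is_subgroup H,
      forall f, nuH_finite H f
    & forall hs : seq G, exists h0, in_DfH H (in_conj_union H hs) h0].

Definition FM : Prop := exists H, FM_pair H.

(* A_G : formal words g_1^{s_1} ... g_k^{s_k} *)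
Section Words.
Variable R : realType.
Definition word := seq (G * R).
Definition wcat (a b : word) : word := a ++ b.
Definition wbar (a : word) : word := rev [seq (p.1, - p.2) | p <- a].
Definition wscale (l : R) (a : word) : word := [seq (p.1, l * p.2) | p <- a].

Definition weval (a : word) (n : nat) : G :=
  gprod [seq zpowg p.1 (Num.floor (p.2 * n%:R)) | p <- a].

(* the sequence n |-> nu(g_1^{[s_1 n]} ... g_k^{[s_k n]}) / n,
   whose limit is ||a||_nu *)
Definition wnorm_seq (nu : G -> R) (a : word) (n : nat) : R :=
  nu (weval a n) / n%:R.
End Words.
End Defs.

From HB Require Import structures.
From mathcomp Require Import all_boot all_order all_algebra.
From mathcomp Require Import all_classical all_reals all_analysis.
From mathcomp Require Import zify ring lra.
Import Order.TTheory GRing.Theory Num.Theory.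
Set Implicit Arguments.
Unset Strict Implicit.
Unset Printing Implicit Defensive.
Local Open Scope ring_scope.
Local Open Scope classical_set_scope.

(* Every letter g_i of the word is a product of
   conjugates c h c^-1 (h in H, c in a finite list cs); let L be the subgroup
   generated by all such conjugates.  FM yields psi with psi x psi^-1 commuting
   with L for every x in L, which bounds the norm of every commutator of L by
   4 nu(psi).  Evaluated at n, the word is a product of three blocks of powers
   of the g_i; moving the k-th factors of the last two blocks next to the k-th
   factor of the first block costs one commutator of L each, and the collected
   exponents floor(-(l1+l2)s n) + floor(l1 s n) + floor(l2 s n) lie in
   [-2, 0].  Hence nu of the word is bounded uniformly in n, and its quotient
   by n tends to 0. *)

Section GroupFacts.
Variable G : groupType.
Implicit Types (s : seq G) (x y c h : G).
Local Open Scope group_scope.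

Lemma gprod_cat s1 s2 : gprod (s1 ++ s2) = gprod s1 * gprod s2.
Proof. by elim: s1 => [|x s IH] /=; rewrite ?mul1g // IH mulgA. Qed.

Lemma gprod_rcons s x : gprod (rcons s x) = gprod s * x.
Proof. by rewrite -cats1 gprod_cat /= mulg1. Qed.

Lemma gprodV s : (gprod s)^-1 = gprod (rev [seq x^-1 | x <- s]).
Proof.
elim: s => [|x s IH] /=; first by rewrite invg1.
by rewrite rev_cons gprod_rcons invgM IH.
Qed.

Lemma zpowgS x z : zpowg x (z + 1)%R = zpowg x z * x.
Proof.
case: z => [n|[|m]].
- by rewrite -PoszD addn1 /= expgSr.
- by rewrite /= mulVg.
- have -> : (Negz m.+1 + 1 = Negz m)%R by rewrite !NegzE; lia.
  by rewrite /= [x ^+ m.+2]expgS invgM -mulgA mulVg mulg1.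
Qed.

Lemma zpowgSN x z : zpowg x (z - 1)%R = zpowg x z * x^-1.
Proof. by rewrite -{2}(subrK 1%R z) zpowgS mulgK. Qed.

Lemma zpowgD x a b : zpowg x (a + b)%R = zpowg x a * zpowg x b.
Proof.
case: b => n; elim: n => [|n IH].
- by rewrite addr0 /= mulg1.
- rewrite -addn1 PoszD addrA !zpowgS IH.
  by rewrite -mulgA -zpowgS.
- by rewrite NegzE zpowgSN.
- have e z : (z + Negz n.+1 = z + Negz n - 1)%R by rewrite !NegzE; lia.
  by rewrite e zpowgSN IH -[Negz n.+1]add0r e add0r zpowgSN mulgA.
Qed.

Lemma commutator_commute_decomp (a a' b : G) : commute a' b ->
  a * b * a^-1 * b^-1 = (a * a'^-1) * (b * (a * a'^-1)^-1 * b^-1).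
Proof.
move=> comm_ab; rewrite invgM invgK !mulgA.
by rewrite -(mulgA _ b a') -comm_ab mulgA mulgVK.
Qed.

Lemma cj1 c : cj c 1 = 1.
Proof. by rewrite /cj mulg1 mulgV. Qed.

Lemma cjM c x y : cj c (x * y) = cj c x * cj c y.
Proof. by rewrite /cj !mulgA mulgVK. Qed.

Lemma cjV c h : cj c h^-1 = (cj c h)^-1.
Proof. by rewrite /cj !invgM invgK mulgA. Qed.

Section Subgroup.
Variable L : G -> Prop.
Hypothesis L_subgroup : is_subgroup L.

Lemma subgroup_gprod s : (forall x, x \in s -> L x) -> L (gprod s).
Proof.
case: L_subgroup => L1 LM _.
elim: s => [|x s IH] Ls //=; apply: LM; first by apply: Ls; rewrite mem_head.
by apply: IH => y ys; apply: Ls; rewrite inE ys orbT.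
Qed.

Lemma subgroup_zpowg x z : L x -> L (zpowg x z).
Proof.
case: L_subgroup => L1 LM LV Lx.
have Lexp n : L (x ^+ n) by elim: n => [|n IH] //; rewrite expgS; apply: LM.
by case: z => n /=; last apply: LV.
Qed.

End Subgroup.

Section ConjSpan.
Variable H : G -> Prop.

Definition conj_span (cs : seq G) (x : G) : Prop :=
  exists s : seq (G * G), (forall p, p \in s -> p.1 \in cs /\ H p.2) /\
    x = gprod [seq cj p.1 p.2 | p <- s].

Lemma conj_span_subgroup cs : is_subgroup H -> is_subgroup (conj_span cs).
Proof.
case=> _ _ HV; split; first by exists [::].
  move=> x y [s1 [h1 ->]] [s2 [h2 ->]]; exists (s1 ++ s2); split.
    by move=> p; rewrite mem_cat => /orP [/h1|/h2].
  by rewrite map_cat gprod_cat.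
move=> x [s [hs ->]]; exists (rev [seq (p.1, p.2^-1) | p <- s]); split.
  move=> p; rewrite mem_rev => /mapP [q /hs [q1 q2] ->].
  by split => //; apply: HV.
rewrite gprodV map_rev -!map_comp; congr (gprod (rev _)).
by apply: eq_map => p /=; rewrite cjV.
Qed.

Lemma conj_span_subset cs cs' x :
  {subset cs <= cs'} -> conj_span cs x -> conj_span cs' x.
Proof. by move=> sub [s [hs ->]]; exists s; split => // p /hs [/sub]. Qed.

Lemma nuH_finite_conj_span_seq s :
  (forall f, nuH_finite H f) -> exists cs, forall x, x \in s -> conj_span cs x.
Proof.
move=> Hfin; elim: s => [|y s [cs IH]]; first by exists [::].
have [t [ht y_eq]] := Hfin y.
exists ([seq p.1 | p <- t] ++ cs) => x; rewrite inE => /orP [/eqP -> | xs].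
  by exists t; split => // p pt; split; [rewrite mem_cat map_f | exact: ht].
by apply: conj_span_subset (IH x xs) => c cs_c; rewrite mem_cat cs_c orbT.
Qed.

Lemma conj_span_commute cs psi :
  (forall x y, in_conj_union H cs x -> in_conj_union H cs y ->
     commute (cj psi x) y) ->
  forall a b, conj_span cs a -> conj_span cs b -> commute (cj psi a) b.
Proof.
move=> hcomm.
have gen p : p.1 \in cs /\ H p.2 -> in_conj_union H cs (cj p.1 p.2).
  by case=> p1 p2; exists p.1 => //; exists p.2.
have comm_gen x b : in_conj_union H cs x -> conj_span cs b -> commute (cj psi x) b.
  move=> hx [s [hs ->]]; elim: s hs => [|p s IH] hs /=; first exact: commute1.
  apply: commuteM; first by apply/hcomm/gen/hs/mem_head.
  by apply: IH => q qs; apply: hs; rewrite inE qs orbT.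
move=> _ b [s [hs ->]] hb; elim: s hs => [|p s IH] hs /=.
  by rewrite cj1; apply/commute_sym/commute1.
rewrite cjM; apply/commute_sym/commuteM; apply: commute_sym.
  by apply/comm_gen/hb/gen/hs/mem_head.
by apply: IH => q qs; apply: hs; rewrite inE qs orbT.
Qed.

End ConjSpan.
End GroupFacts.

Lemma floor_sum3_bounds (R : archiRealFieldType) (x y z : R) : x + y + z = 0 ->
  (-2 <= Num.floor x + Num.floor y + Num.floor z <= 0)%R.
Proof.
move=> xyz0.
have := floor_le x; have := floor_le y; have := floor_le z.
have := floorD1_gt x; have := floorD1_gt y; have := floorD1_gt z.
rewrite !intrD => ltz lty ltx lez ley lex.
set e := (Num.floor x + Num.floor y + Num.floor z)%R.
have : (e%:~R : R) <= 0 by rewrite /e !intrD; lra.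
have : (0 : R) < (e + 3)%:~R by rewrite /e !intrD; lra.
rewrite lerz0 ltr0z => ? ?; apply/andP; split; lia.
Qed.

Section PseudoNorm.
Variables (G : groupType) (R : realType) (nu : G -> R).
Hypothesis hnu : ci_pseudo_norm nu.
Local Open Scope group_scope.

Lemma nu1 : nu 1 = 0. Proof. by case: hnu. Qed.
Lemma nu_ge0 f : 0 <= nu f. Proof. by case: hnu. Qed.
Lemma nuV f : nu f^-1 = nu f. Proof. by case: hnu. Qed.
Lemma nuM f g : nu (f * g) <= nu f + nu g. Proof. by case: hnu. Qed.
Lemma nuJ f g : nu (g * f * g^-1) = nu f. Proof. by case: hnu => _ _ _ _; apply. Qed.

Lemma nu_insert a k b : nu (a * k * b) <= nu k + nu (a * b).
Proof.
have -> : a * k * b = (a * k * a^-1) * (a * b) by rewrite !mulgA mulgVK.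
by rewrite -(nuJ k a) nuM.
Qed.

Lemma nu_zpowg_le x e : (-2 <= e <= 0)%R -> nu (zpowg x e) <= nu x *+ 2.
Proof.
move=> /andP [e_ge e_le].
have : e = 0 \/ e = Negz 0 \/ e = Negz 1 by rewrite !NegzE; lia.
case=> [->|[->|->]] /=; rewrite ?nuV mulr2n.
- by rewrite nu1 addr_ge0 ?nu_ge0.
- by rewrite lerDl nu_ge0.
- exact: nuM.
Qed.

Lemma nu_zpowg_floor_le (x : G) (a b c : R) : a + b + c = 0 ->
  nu (zpowg x (Num.floor a) * zpowg x (Num.floor b) * zpowg x (Num.floor c))
    <= nu x *+ 2.
Proof. by move=> abc0; rewrite -!zpowgD; apply/nu_zpowg_le/floor_sum3_bounds. Qed.

Lemma nu_commutator_le psi a b : commute (cj psi a) b ->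
  nu (a * b * a^-1 * b^-1) <= (4%:R * nu psi)%R.
Proof.
move=> /commutator_commute_decomp ->.
have nu_aa' : nu (a * (cj psi a)^-1) <= nu psi *+ 2.
  have -> : a * (cj psi a)^-1 = (a * psi * a^-1) * psi^-1.
    by rewrite /cj !invgM invgK !mulgA.
  by rewrite mulr2n -{2}(nuV psi) -(nuJ psi a) nuM.
apply: le_trans (nuM _ _) _; rewrite nuJ nuV.
by rewrite mulr_natl -[4%N]/(2 + 2)%N mulrnDr lerD.
Qed.

Section CommutatorBounded.
Variables (L : G -> Prop) (C : R).
Hypothesis L_subgroup : is_subgroup L.
Hypothesis nu_commutator_L :
  forall a b, L a -> L b -> nu (a * b * a^-1 * b^-1) <= C.

(* Induction on the length: the first factors u, v, w are brought together at
   the cost of the commutator of Y^-1 and w^-1, where Y is the rest of the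
   middle block. *)
Lemma nu_gprod_rearrange (T : eqType) (l : seq T) (fu fv fw : T -> G) :
  (forall p, p \in l -> [/\ L (fu p), L (fv p) & L (fw p)]) ->
  nu (gprod (rev (map fu l)) * gprod (map fv l) * gprod (map fw l))
    <= \sum_(p <- l) (nu (fu p * fv p * fw p) + C).
Proof.
case: (L_subgroup) => _ _ LV.
elim: l => [|p l IH] Ll /=; first by rewrite big_nil !mulg1 nu1.
have Ll' q : q \in l -> [/\ L (fu q), L (fv q) & L (fw q)].
  by move=> ql; apply: Ll; rewrite inE ql orbT.
have [_ _ Lw] := Ll p (mem_head _ _).
rewrite big_cons rev_cons gprod_rcons.
set X := gprod (rev _); set Y := gprod (map fv l); set Z := gprod (map fw l).
have LY : L Y by apply: subgroup_gprod => // _ /mapP [q /Ll' [_ Lq _] ->].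
set u := fu p; set v := fv p; set w := fw p.
have -> : X * u * (v * Y) * (w * Z) =
          (X * (u * v * w) * Y) * (Y^-1 * w^-1 * Y^-1^-1 * w^-1^-1) * Z.
  by rewrite !invgK !mulgA !mulgK.
apply: le_trans (nu_insert _ _ _) _.
rewrite [leRHS]addrAC [leRHS]addrC; apply: lerD.
  by apply: nu_commutator_L; apply: LV.
rewrite -[X * _ * Y * Z]mulgA; apply: le_trans (nu_insert _ _ _) _.
by apply: lerD => //; rewrite mulgA; apply: IH.
Qed.

End CommutatorBounded.
End PseudoNorm.

Lemma bounded_div_cvg0 (R : realType) (u : nat -> R) (D : R) :
  (forall n, 0 <= u n <= D) -> (fun n => u n / n%:R) @ \oo --> 0.
Proof.
move=> u_bnd.
have n_gt0 : \forall n \near \oo, (0 : R) < (n : nat)%:R.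
  by near=> n; rewrite ltr0n; near: n; exists 1%N.
have inv_cvg0 : (fun n : nat => n%:R^-1 : R) @ \oo --> 0 :=
  (gtr0_cvgV0 (f := fun n => n%:R) n_gt0).2 cvgr_idn.
have scale_cvg0 (c : R) : (fun n : nat => c * n%:R^-1) @ \oo --> 0.
  by rewrite -(mulr0 c); apply: cvgMl_tmp; exact: inv_cvg0.
apply: (squeeze_cvgr _ (scale_cvg0 0) (scale_cvg0 D)).
near=> n; have /andP [u_ge0 u_le] := u_bnd n.
by rewrite mul0r divr_ge0 ?ler0n //= ler_wpM2r ?invr_ge0 ?ler0n.
Unshelve. all: end_near.
Qed.

Lemma weval_triple (G : groupType) (R : realType) (g : word G R) (l1 l2 : R) n :
  weval (wcat (wcat (wscale (l1 + l2) (wbar g)) (wscale l1 g)) (wscale l2 g)) n =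
  (gprod (rev [seq zpowg p.1 (Num.floor ((l1 + l2) * - p.2 * n%:R)) | p <- g]) *
   gprod [seq zpowg p.1 (Num.floor (l1 * p.2 * n%:R)) | p <- g] *
   gprod [seq zpowg p.1 (Num.floor (l2 * p.2 * n%:R)) | p <- g])%g.
Proof. by rewrite /weval /wcat /wscale /wbar !map_cat !gprod_cat !map_rev -!map_comp. Qed.

Theorem lemma3p3 (G : groupType) (R : realType) (nu : G -> R)
  (hFM : FM G) (hnu : ci_pseudo_norm nu) (g : word G R) (l1 l2 : R) :
  wnorm_seq nu (wcat (wcat (wscale (l1 + l2) (wbar g)) (wscale l1 g))
                     (wscale l2 g)) @ \oo --> 0.
Proof.
case: hFM => H [H_subgroup H_fin H_D].
have [cs g_span] := nuH_finite_conj_span_seq [seq p.1 | p <- g] H_fin.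
have [h0 /(_ cs) [h h_comm]] := H_D cs.
have L_subgroup := conj_span_subgroup cs H_subgroup.
have L_comm a b : conj_span H cs a -> conj_span H cs b ->
    nu (a * b * a^-1 * b^-1)%g <= 4%:R * nu (cj h h0).
  by move=> La Lb; apply/(nu_commutator_le hnu)/(conj_span_commute h_comm).
apply: (bounded_div_cvg0 (D := \sum_(p <- g) (nu p.1 *+ 2 + 4%:R * nu (cj h h0)))).
move=> n; rewrite nu_ge0 //= weval_triple.
apply: le_trans (nu_gprod_rearrange hnu L_subgroup L_comm _) _.
  move=> p pg; have Lp := g_span _ (map_f fst pg).
  by split; apply: subgroup_zpowg.
apply: ler_sum => p _; rewrite lerD2r.
by apply: nu_zpowg_floor_le => //; ring.
Qed.
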